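(* There exists a simple undirected graph on $N$ nodes with adjacency matrix $\mathbf{A}\in\{0,1\}^{N\times N}$ such that for all $\mathbf{R}\in\mathbb{R}^{N\times 2}$ and $\mathbf{C}\in\mathbb{R}^{2\times N}$, it is not the case that $\operatorname{sign}(A_{ij})=\operatorname{sign}((\mathbf{R}\mathbf{C})_{ij})$ for all $i\neq j$.
   Context: $\operatorname{sign}:\mathbb{R}\to\{+,-\}$ takes the value $-$ on $(-\infty,0]$ and $+$ on $(0,\infty)$. Graphs have no self-loops and diagonal entries of adjacency matrices are ignored throughout. *)

From HB Require Import structures.
From mathcomp Require Import all_boot all_order all_algebra.
From mathcomp Require Import Rstruct.
From Stdlib Require Rdefinitions.
Set Implicit Arguments. Unset Strict Implicit. Unset Printing Implicit Defensive.
Import Order.TTheory GRing.Theory Num.Theory.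
Local Open Scope ring_scope.

(* sign : R -> {+,-}; encoded as bool: true = '+', false = '-'.
   sign x = - on (-oo,0], + on (0,oo). *)
Definition sign (x : Rdefinitions.R) : bool := (0 < x).

Definition is_simple_adj (N : nat) (A : 'M[Rdefinitions.R]_N) : Prop :=
  (forall i j, A i j = 0 \/ A i j = 1) /\
  (forall i j, A i j = A j i) /\
  (forall i, A i i = 0).

(* Take three "row" vertices and, for every sign pattern s in {+,-}^3, a
   "column" vertex adjacent exactly to the row vertices where s is +.  If
   R C matched the signs of the adjacency matrix off the diagonal, the 3 x 8
   block of R C on rows and columns would realize every sign pattern in its
   columns.  Such a matrix has linearly independent rows: against a relation
   sum_i a_i u_i = 0, the column with the signs of a makes every term
   a_i u_ij >= 0, forcing a <= 0, and the column with the signs of -a forces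
   a >= 0.  But the block factors through R^2, so its rank is at most 2. *)
From mathcomp Require Import all_boot all_order all_algebra.
From mathcomp Require Import Rstruct.
From Stdlib Require Rdefinitions.
Set Implicit Arguments. Unset Strict Implicit. Unset Printing Implicit Defensive.
Import Order.TTheory GRing.Theory Num.Theory.
Local Open Scope ring_scope.

Section SignPatterns.

Variable R : realFieldType.

Lemma sign_aligned_sum_eq0_nonpos k (a u : 'I_k -> R) :
  (forall i, (0 < u i) = (0 < a i)) -> \sum_i a i * u i = 0 ->
  forall i, a i <= 0.
Proof.
move=> aligned sum0.
have term_ge0 i : 0 <= a i * u i.
  case: (ltrP 0 (a i)) => [a_gt0 | a_le0].
    by rewrite mulr_ge0 ?ltW // aligned.
  by rewrite mulr_le0 // leNgt aligned -leNgt.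
move=> i; rewrite leNgt; apply/negP => a_gt0.
have /eqP := psumr_eq0P (fun j _ => term_ge0 j) sum0 (i := i) isT.
by rewrite mulf_eq0 !gt_eqF // aligned.
Qed.

Lemma row_free_sign_patterns k n (U : 'M[R]_(k, n)) :
  (forall s : 'I_k -> bool, exists j, forall i, (0 < U i j) = s i) ->
  row_free U.
Proof.
move=> patterns; apply: inj_row_free => v vU0; apply/rowP => i; rewrite mxE.
have relation j : \sum_i v 0 i * U i j = 0.
  by move/rowP: vU0 => /(_ j); rewrite !mxE.
have [j_pos pos] := patterns (fun i => 0 < v 0 i).
have [j_neg neg] := patterns (fun i => 0 < - v 0 i).
have relationN : \sum_i - v 0 i * U i j_neg = 0.
  by under eq_bigr do rewrite mulNr; rewrite sumrN relation oppr0.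
apply/eqP; rewrite eq_le (sign_aligned_sum_eq0_nonpos pos (relation j_pos)).
by rewrite -oppr_le0 (sign_aligned_sum_eq0_nonpos neg relationN).
Qed.

Lemma not_row_free_mul k d n (A : 'M[R]_(k, d)) (B : 'M[R]_(d, n)) :
  (d < k)%N -> ~~ row_free (A *m B).
Proof.
move=> lt_dk; rewrite /row_free neq_ltn.
by rewrite (leq_ltn_trans (leq_trans (mxrankM_maxl _ _) (rank_leq_col _))).
Qed.

End SignPatterns.

Definition adj_mx (R : nzRingType) (T : finType) (e : rel T) : 'M[R]_#|T| :=
  \matrix_(x, y) (e (enum_val x) (enum_val y))%:R.

Lemma adj_mx_simple (T : finType) (e : rel T) :
  symmetric e -> irreflexive e -> is_simple_adj (adj_mx Rdefinitions.R e).
Proof.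
move=> e_sym e_irr; split; [|split] => [x y | x y | x]; rewrite !mxE.
- by case: (e _ _); [right | left].
- by rewrite e_sym.
- by rewrite e_irr.
Qed.

Notation pattern_vertex k := ('I_k + {ffun 'I_k -> bool})%type.

Definition pattern_edge k : rel (pattern_vertex k) := fun x y =>
  match x, y with
  | inl i, inr s | inr s, inl i => s i
  | _, _ => false
  end.

Lemma pattern_edge_sym k : symmetric (@pattern_edge k).
Proof. by case=> [i|s] [j|t]. Qed.

Lemma pattern_edge_irr k : irreflexive (@pattern_edge k).
Proof. by case. Qed.

Theorem pattern_graph_sign_rank_gt (R : realFieldType) d
    (Rm : 'M[R]_(#|{: pattern_vertex d.+1}|, d))
    (Cm : 'M[R]_(d, #|{: pattern_vertex d.+1}|)) :
  ~ (forall x y, x != y ->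
       (0 < adj_mx R (@pattern_edge d.+1) x y) = (0 < (Rm *m Cm) x y)).
Proof.
move=> sign_match.
pose row_vertex i := enum_rank (inl i : pattern_vertex d.+1).
pose col_vertex (j : 'I_#|{: {ffun 'I_d.+1 -> bool}}|) :=
  enum_rank (inr (enum_val j) : pattern_vertex d.+1).
suff : row_free (mxsub row_vertex col_vertex (Rm *m Cm)).
  by rewrite mxsub_mul (negPf (not_row_free_mul _ _ _)).
apply: row_free_sign_patterns => s; exists (enum_rank (finfun s)) => i.
rewrite mxE -sign_match; last by rewrite (inj_eq enum_rank_inj).
by rewrite mxE !enum_rankK /= ffunE ltr0n lt0b.
Qed.

Theorem theorem1 :
  exists (N : nat) (A : 'M[Rdefinitions.R]_N),
    is_simple_adj A /\
    forall (Rm : 'M[Rdefinitions.R]_(N, 2)) (Cm : 'M[Rdefinitions.R]_(2, N)),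
      ~ (forall i j : 'I_N, i != j -> sign (A i j) = sign ((Rm *m Cm) i j)).
Proof.
exists #|{: pattern_vertex 3}|, (adj_mx Rdefinitions.R (@pattern_edge 3)); split.
  exact: adj_mx_simple (@pattern_edge_sym 3) (@pattern_edge_irr 3).
exact: (@pattern_graph_sign_rank_gt _ 2).
Qed.
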